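(* Let $M \in \mathbb{Z}^{\ell \times m}$ have full column rank and let $F \in \mathbb{Z}^{n \times m}$. Then the $(\ell+n)\times(m+n)$ integer matrix $$\begin{bmatrix} M & 0 \\ F & I_n \end{bmatrix}$$ has full column rank, and its Hermite basis has the block shape $$\begin{bmatrix} T & X \\ 0 & H \end{bmatrix}$$ with $T \in \mathbb{Z}^{m\times m}$, $X\in\mathbb{Z}^{m\times n}$, $H \in \mathbb{Z}^{n \times n}$, where $\mathcal{L}(T) = \mathcal{L}(M) + \mathcal{L}(F)$ and $\mathcal{L}(H) = \mathcal{R}(M,F)$.
   Context: For an integer matrix $A$, $\mathcal{L}(A)$ denotes the lattice of all $\mathbb{Z}$-linear combinations of the rows of $A$; $\mathcal{L}(A)+\mathcal{L}(B)$ is the lattice generated by the rows of $A$ and $B$ together. For $M \in \mathbb{Z}^{\ell \times m}$ of full column rank and $F \in \mathbb{Z}^{n \times m}$, the integer relations lattice is $\mathcal{R}(M,F) := \{p \in \mathbb{Z}^{1\times n} : pF \in \mathcal{L}(M)\}$ (equivalently, $pF = qM$ for some integer row vector $q$). A full column rank integer matrix with $m$ columns is in (row) Hermite form if its first $m$ rows form an upper triangular matrix with positive diagonal entries $h_1,\dots,h_m$, every entry above the diagonal in column $j$ lies in $[0,h_j)$, and all remaining rows are zero. Every full column rank integer matrix $A$ has a unique Hermite form $WA$ with $W$ unimodular; the Hermite basis of $A$ is the nonsingular square matrix consisting of the nonzero rows of the Hermite form of $A$; it is the unique matrix in Hermite form whose row lattice equals $\mathcal{L}(A)$. *)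

From HB Require Import structures.
From mathcomp Require Import all_boot all_order all_algebra.
Set Implicit Arguments. Unset Strict Implicit. Unset Printing Implicit Defensive.
Import Order.TTheory GRing.Theory Num.Theory.
Local Open Scope ring_scope.

Definition in_lattice (r c : nat) (A : 'M[int]_(r, c)) (v : 'rV[int]_c) : Prop :=
  exists w : 'rV[int]_r, v = w *m A.

Definition same_lattice (r1 r2 c : nat) (A : 'M[int]_(r1, c)) (B : 'M[int]_(r2, c)) : Prop :=
  forall v, in_lattice A v <-> in_lattice B v.

Definition full_col_rank (r c : nat) (A : 'M[int]_(r, c)) : Prop :=
  \rank (map_mx (fun x : int => x%:~R : rat) A) = c.

Definition in_relations (l m n : nat) (M : 'M[int]_(l, m)) (F : 'M[int]_(n, m))
  (p : 'rV[int]_n) : Prop :=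
  exists q : 'rV[int]_l, p *m F = q *m M.

Definition is_hermite (c : nat) (H : 'M[int]_c) : Prop :=
  forall i j : 'I_c,
    [/\ ((j < i)%N -> H i j = 0),
        (i = j -> 0 < H i j) &
        ((i < j)%N -> 0 <= H i j < H j j)].

Definition hermite_basis_of (r c : nat) (A : 'M[int]_(r, c)) (B : 'M[int]_c) : Prop :=
  is_hermite B /\ same_lattice B A.

From HB Require Import structures.
From mathcomp Require Import all_boot all_order all_algebra.
From Stdlib Require Import Classical.
From Stdlib Require Wf_nat.
Import Order.TTheory GRing.Theory Num.Theory.

(* The rows of the Hermite basis are pivot vectors: the i-th row realises the
   positive generator h_i of the ideal of i-th entries of lattice vectors whose
   first i entries vanish; full column rank makes every such ideal nonzero, and
   subtracting multiples of lower rows puts the entries above each pivot into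
   [0, h_j).  For the block matrix [M 0; F 1] the lattice is
   {(aM + bF, b)}, while a block upper triangular basis [T X; 0 H] gives
   {(w1 T, w1 X + w2 H)}; comparing the first components with w2 = 0 yields
   L(T) = L(M) + L(F), and comparing vectors (0, p), where w1 T = 0 forces
   w1 = 0 since det T != 0, yields L(H) = R(M, F). *)

Set Implicit Arguments.
Unset Strict Implicit.
Unset Printing Implicit Defensive.

Local Open Scope ring_scope.

Local Notation ratmx A := (map_mx (fun x : int => x%:~R : rat) A).

Lemma classic_ex_minP (P : nat -> Prop) :
  (exists n, P n) -> exists n, P n /\ forall k, P k -> (n <= k)%N.
Proof.
move=> /(Wf_nat.dec_inh_nat_subset_has_unique_least_element P (fun n => classic (P n))).
by move=> [n [[Pn n_min] _]]; exists n; split=> // k /n_min /ssrnat.leP.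
Qed.

Lemma clear_denominators r c (C : 'M[rat]_(r, c)) :
  exists2 d : int, 0 < d & exists D : 'M[int]_(r, c), ratmx D = d%:~R *: C.
Proof.
pose d := \prod_(k : 'I_r * 'I_c) denq (C k.1 k.2).
have d_int i j : (numq (d%:~R * C i j))%:~R = d%:~R * C i j.
  have -> : d = denq (C i j) * \prod_(k | k != (i, j)) denq (C k.1 k.2).
    by rewrite /d (bigD1 (i, j)).
  by rewrite intrM mulrAC [_ * C i j]mulrC -numqE -intrM numq_int.
exists d; first by apply: prodr_gt0 => k _; apply: denq_gt0.
by exists (\matrix_(i, j) numq (d%:~R * C i j)); apply/matrixP => i j; rewrite !mxE d_int.
Qed.

Lemma full_col_rank_left_inverse r c (A : 'M[int]_(r, c)) : full_col_rank A ->
  exists2 d : int, 0 < d & exists D : 'M[int]_(c, r), D *m A = d%:M.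
Proof.
move=> fA; have /row_fullP [C CA] : row_full (ratmx A) by rewrite /row_full fA.
have [d d_gt0 [D DC]] := clear_denominators C.
exists d => //; exists D.
have : ratmx (D *m A) = ratmx d%:M.
  by rewrite map_mxM DC -scalemxAl CA scalemx1 map_scalar_mx.
move/matrixP => DA; apply/matrixP => i j.
by move: (DA i j); rewrite !mxE => /intr_inj.
Qed.

Lemma row_full_extended (K : fieldType) l m n (M : 'M[K]_(l, m)) (F : 'M[K]_(n, m)) :
  row_full M -> row_full (block_mx M 0 F 1%:M).
Proof.
move=> /row_fullP [C CM]; apply/row_fullP.
exists (block_mx C 0 (- (F *m C)) 1%:M).
rewrite mulmx_block !mul0mx !mulmx0 !mul1mx !addr0 !add0r CM.
by rewrite mulNmx -mulmxA CM mulmx1 addNr -scalar_mx_block.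
Qed.

Section LatticeClosure.
Variables (r c : nat) (A : 'M[int]_(r, c)).

Lemma in_lattice0 : in_lattice A 0.
Proof. by exists 0; rewrite mul0mx. Qed.

Lemma in_lattice_row i : in_lattice A (row i A).
Proof. by exists (delta_mx 0 i); rewrite rowE. Qed.

Lemma in_latticeD u v : in_lattice A u -> in_lattice A v -> in_lattice A (u + v).
Proof. by move=> [x ->] [y ->]; exists (x + y); rewrite mulmxDl. Qed.

Lemma in_latticeZ q v : in_lattice A v -> in_lattice A (q *: v).
Proof. by move=> [x ->]; exists (q *: x); rewrite scalemxAl. Qed.

Lemma in_lattice_subZ q u v :
  in_lattice A u -> in_lattice A v -> in_lattice A (u - q *: v).
Proof. by move=> Lu Lv; rewrite -scaleNr; apply/in_latticeD/in_latticeZ. Qed.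

Lemma in_lattice_of_rows s (B : 'M[int]_(s, c)) :
  (forall i, in_lattice A (row i B)) -> forall v, in_lattice B v -> in_lattice A v.
Proof.
move=> /fin_all_exists [w Bw] v [x ->]; exists (x *m \matrix_i w i).
by rewrite -mulmxA; congr (_ *m _); apply/row_matrixP => i; rewrite row_mul rowK Bw.
Qed.

End LatticeClosure.

Definition zero_prefix c (t : nat) (v : 'rV[int]_c) :=
  forall j : 'I_c, (j < t)%N -> v 0 j = 0.

Lemma zero_prefix0 c (v : 'rV[int]_c) : zero_prefix 0 v.
Proof. by move=> j; rewrite ltn0. Qed.

Lemma zero_prefix_subZ c t q (u v : 'rV[int]_c) :
  zero_prefix t u -> zero_prefix t v -> zero_prefix t (u - q *: v).
Proof. by move=> zu zv j jt; rewrite !mxE zu // zv // mulr0 subr0. Qed.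

Section HermiteBasis.
Variables (r c : nat) (A : 'M[int]_(r, c)).

Definition pivot_vector (i : 'I_c) (v : 'rV[int]_c) :=
  [/\ in_lattice A v, zero_prefix i v & 0 < v 0 i].

Hypothesis pivots_exist : forall i, exists v, pivot_vector i v.

Lemma lattice_pivot i : exists2 p, pivot_vector i p &
  forall v, in_lattice A v -> zero_prefix i v -> (p 0%R i %| v 0%R i)%Z.
Proof.
pose P k := exists2 p, pivot_vector i p & p 0 i = k%:Z.
have [n [[p pp pn] n_min]] : exists n, P n /\ forall k, P k -> (n <= k)%N.
  apply: classic_ex_minP; have [v pv] := pivots_exist i.
  by exists `|v 0%R i|%N, v; rewrite // gtz0_abs; case: pv.
exists p => // v Lv zv; have [Lp zp p_gt0] := pp.
pose u := v - (v 0%R i %/ p 0%R i)%Z *: p.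
have u_mod : u 0 i = (v 0%R i %% p 0%R i)%Z by rewrite !mxE.
have p_neq0 : p 0 i != 0 by rewrite gt_eqF.
apply/dvdz_mod0P; rewrite -u_mod.
have := modz_ge0 (v 0 i) p_neq0; rewrite -u_mod le_eqVlt => /orP [/eqP <- // | u_gt0].
(* a nonzero remainder would be a smaller pivot *)
have /n_min : P `|u 0%R i|%N.
  exists u; last by rewrite gtz0_abs.
  by split=> //; [apply: in_lattice_subZ | apply: zero_prefix_subZ].
rewrite leqNgt => /negP []; rewrite -ltz_nat gtz0_abs // -pn.
by have := ltz_mod (v 0 i) p_neq0; rewrite -u_mod gtr0_norm.
Qed.

Lemma reduce_pivot (p : 'I_c -> 'rV[int]_c) : (forall i, pivot_vector i (p i)) ->
  forall i : 'I_c, exists v, [/\ in_lattice A v, zero_prefix i v, v 0 i = p i 0 i &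
    forall k : 'I_c, (i < k)%N -> 0 <= v 0 k < p k 0 k].
Proof.
move=> pp i.
suff /(_ c) [v [Lv zv vi v_red]] : forall t, exists v,
    [/\ in_lattice A v, zero_prefix i v, v 0 i = p i 0 i &
     forall k : 'I_c, (i < k < t)%N -> 0 <= v 0 k < p k 0 k].
  by exists v; split=> // k ik; apply: v_red; rewrite ik ltn_ord.
elim=> [|t [v [Lv zv vi v_red]]].
  by exists (p i); have [Lp zp _] := pp i; split=> // k; rewrite ltn0 andbF.
have [/andP [it tc] | t_out] := boolP ((i < t) && (t < c))%N; last first.
  exists v; split=> // k /andP [ik]; rewrite ltnS leq_eqVlt => /orP [/eqP kt | kt].
    by case/negP: t_out; rewrite -kt ik ltn_ord.
  by apply: v_red; rewrite ik kt.
pose T := Ordinal tc; have [LpT zpT pT_gt0] := pp T.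
pose w := v - (v 0%R T %/ p T 0%R T)%Z *: p T.
have w_low (k : 'I_c) : (k < t)%N -> w 0 k = v 0 k.
  by move=> kt; rewrite !mxE (zpT k kt) mulr0 subr0.
exists w; split; first exact: in_lattice_subZ.
- by move=> j ji; rewrite w_low ?zv // (ltn_trans ji it).
- by rewrite w_low.
move=> k /andP [ik]; rewrite ltnS leq_eqVlt => /orP [/eqP kt | kt].
  have -> : k = T by apply: val_inj.
  have pT_neq0 : p T 0 T != 0 by rewrite gt_eqF.
  have -> : w 0 T = (v 0%R T %% p T 0%R T)%Z by rewrite !mxE.
  by rewrite modz_ge0 //=; have := ltz_mod (v 0 T) pT_neq0; rewrite gtr0_norm.
by rewrite w_low // v_red // ik kt.
Qed.

Lemma pivot_rows_span (B : 'M[int]_c) :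
  (forall i, pivot_vector i (row i B)) ->
  (forall (i : 'I_c) v, in_lattice A v -> zero_prefix i v -> (B i i %| v 0%R i)%Z) ->
  forall v, in_lattice A v -> in_lattice B v.
Proof.
move=> B_piv B_div.
suff /(_ c) span : forall k v, in_lattice A v -> zero_prefix (c - k) v -> in_lattice B v.
  by move=> v Lv; apply: span Lv _; rewrite subnn; apply: zero_prefix0.
elim=> [|k IH] v Lv.
  rewrite subn0 => zv; have -> : v = 0 by apply/rowP => j; rewrite mxE zv.
  exact: in_lattice0.
have [kc | ck] := ltnP k c; last first.
  move=> _; apply: IH => //.
  by rewrite (_ : c - k = 0)%N; [apply: zero_prefix0 | apply/eqP; rewrite subn_eq0].
pose T := rev_ord (Ordinal kc); have [LT zT _] := B_piv T.
move=> zv; pose q := (v 0%R T %/ B T T)%Z.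
have zu : zero_prefix (c - k) (v - q *: row T B).
  rewrite -(subnSK kc) => j; rewrite ltnS leq_eqVlt => /orP [/eqP jT | jT].
    have -> : j = T by apply: val_inj.
    by rewrite !mxE divzK ?subrr //; apply: B_div.
  by move: j jT; apply: zero_prefix_subZ.
have := in_latticeD (IH _ (in_lattice_subZ q Lv LT) zu) (in_latticeZ q (in_lattice_row B T)).
by rewrite subrK.
Qed.

Lemma hermite_exists : exists B, hermite_basis_of A B.
Proof.
have /fin_all_exists2 [p p_piv p_div] := lattice_pivot.
have /fin_all_exists [v v_red] := reduce_pivot p_piv.
pose B := \matrix_i v i.
have v_piv i : pivot_vector i (v i).
  by have [Lv zv vi _] := v_red i; split=> //; rewrite vi; have [] := p_piv i.
exists B; split.
  move=> i j; rewrite !mxE; have [_ zv vi v_red_i] := v_red i; split.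
  - exact: zv.
  - by move=> <-; have [_ _] := v_piv i.
  - by have [_ _ -> _] := v_red j; apply: v_red_i.
move=> w; split.
  by apply: in_lattice_of_rows => i; rewrite rowK; have [] := v_piv i.
apply: pivot_rows_span => [i | i u Lu zu]; rewrite ?rowK //.
by have [_ _ vi _] := v_red i; rewrite mxE vi; apply: p_div.
Qed.

End HermiteBasis.

Lemma full_col_rank_pivots r c (A : 'M[int]_(r, c)) :
  full_col_rank A -> forall i, exists v, pivot_vector A i v.
Proof.
move=> /full_col_rank_left_inverse [d d_gt0 [D DA]] i.
exists (row i D *m A); split; first by exists (row i D).
  move=> j ji; rewrite -row_mul DA !mxE; case: eqP => // ij.
  by move: ji; rewrite ij ltnn.
by rewrite -row_mul DA !mxE eqxx.
Qed.

Lemma is_hermite_ulsubmx m n (B : 'M[int]_(m + n)) :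
  is_hermite B -> is_hermite (ulsubmx B).
Proof.
move=> hB i j; rewrite !mxE; have [low diag up] := hB (lshift n i) (lshift n j).
by split=> // /(congr1 (lshift n)).
Qed.

Lemma is_hermite_det_neq0 c (H : 'M[int]_c) : is_hermite H -> \det H != 0.
Proof.
move=> hH; rewrite -det_tr det_trig; last first.
  by apply/is_trig_mxP => i j ij; rewrite mxE; have [-> //] := hH j i.
apply/prodf_neq0 => i _; have [_ diag _] := hH i i.
by rewrite mxE lt0r_neq0 ?diag.
Qed.

Section ExtendedLattice.
Variables (l m n : nat) (M : 'M[int]_(l, m)) (F : 'M[int]_(n, m)).
Variables (T : 'M[int]_m) (X : 'M[int]_(m, n)) (H : 'M[int]_n).

Lemma in_lattice_extended v : in_lattice (block_mx M 0 F 1%:M) v <->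
  exists a b, v = row_mx (a *m M + b *m F) b.
Proof.
split=> [[w ->] | [a [b ->]]].
  exists (lsubmx w), (rsubmx w).
  by rewrite -{1}(hsubmxK w) mul_row_block mulmx0 mulmx1 add0r.
by exists (row_mx a b); rewrite mul_row_block mulmx0 mulmx1 add0r.
Qed.

Lemma in_lattice_block_upper v : in_lattice (block_mx T X 0 H) v <->
  exists w1 w2, v = row_mx (w1 *m T) (w1 *m X + w2 *m H).
Proof.
split=> [[w ->] | [w1 [w2 ->]]].
  exists (lsubmx w), (rsubmx w).
  by rewrite -{1}(hsubmxK w) mul_row_block mulmx0 addr0.
by exists (row_mx w1 w2); rewrite mul_row_block mulmx0 addr0.
Qed.

Hypothesis same_lattice_blocks :
  same_lattice (block_mx T X 0 H) (block_mx M 0 F 1%:M).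

Lemma lattice_ulsubmx_block : same_lattice T (col_mx M F).
Proof.
move=> v; split=> [[w ->] | [y ->]].
  have /same_lattice_blocks/in_lattice_extended [a [b /eq_row_mx [-> _]]] :
      in_lattice (block_mx T X 0 H) (row_mx (w *m T) (w *m X)).
    by apply/in_lattice_block_upper; exists w, 0; rewrite mul0mx addr0.
  by exists (row_mx a b); rewrite mul_row_col.
have : in_lattice (block_mx M 0 F 1%:M) (row_mx (y *m col_mx M F) (rsubmx y)).
  apply/in_lattice_extended; exists (lsubmx y), (rsubmx y).
  by rewrite -{1}(hsubmxK y) mul_row_col.
move=> /(same_lattice_blocks _).2/in_lattice_block_upper [w [_ /eq_row_mx [yMF _]]].
by exists w; rewrite yMF.
Qed.

Lemma lattice_drsubmx_block : \det T != 0 ->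
  forall p, in_lattice H p <-> in_relations M F p.
Proof.
move=> detT p; split=> [[w ->] | [q pFqM]].
  have /same_lattice_blocks/in_lattice_extended [a [b /eq_row_mx [aMbF0 ->]]] :
      in_lattice (block_mx T X 0 H) (row_mx 0 (w *m H)).
    by apply/in_lattice_block_upper; exists 0, w; rewrite !mul0mx add0r.
  by exists (- a); rewrite mulNmx; apply/eqP; rewrite -subr_eq0 opprK addrC -aMbF0.
have : in_lattice (block_mx M 0 F 1%:M) (row_mx 0 p).
  by apply/in_lattice_extended; exists (- q), p; rewrite mulNmx pFqM addNr.
move=> /(same_lattice_blocks _).2/in_lattice_block_upper [w1 [w2 /eq_row_mx [/esym w1T0 ->]]].
have [w1_0 | w1_neq0] := eqVneq w1 0.
  by exists w2; rewrite w1_0 mul0mx add0r.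
by case/negP: detT; apply/det0P; exists w1.
Qed.

End ExtendedLattice.

Theorem mainTheorem1 (l m n : nat) (M : 'M[int]_(l, m)) (F : 'M[int]_(n, m)) :
  full_col_rank M ->
  let A : 'M[int]_(l + n, m + n) := block_mx M 0 F 1%:M in
  [/\ full_col_rank A,
      exists B : 'M[int]_(m + n), hermite_basis_of A B &
      forall B : 'M[int]_(m + n), hermite_basis_of A B ->
        [/\ dlsubmx B = 0,
            same_lattice (ulsubmx B) (col_mx M F) &
            forall p : 'rV[int]_n, in_lattice (drsubmx B) p <-> in_relations M F p]].
Proof.
move=> fM A.
have fA : full_col_rank A.
  rewrite /full_col_rank map_block_mx map_mx0 map_mx1; apply/eqP/row_full_extended.
  by rewrite /row_full fM.
split=> //; first exact/hermite_exists/full_col_rank_pivots.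
move=> B [hB latB].
have dl : dlsubmx B = 0.
  apply/matrixP => i j; rewrite !mxE; have [low _ _] := hB (rshift m i) (lshift n j).
  by rewrite low //= ltn_addr.
have eB : block_mx (ulsubmx B) (ursubmx B) 0 (drsubmx B) = B by rewrite -dl submxK.
rewrite -eB in latB; split=> //; first exact: lattice_ulsubmx_block latB.
exact/(lattice_drsubmx_block latB)/is_hermite_det_neq0/is_hermite_ulsubmx.
Qed.
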